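(* Let $\mathcal{R}=(\mathcal{W},\mathcal{R}_1,\mathcal{R}_2)$ with $\mathcal{W}=\{1,\dots,m\}$, let $\mathcal{S}$, $L$, $K_1,\dots,K_4$ be constructed from $\mathcal{R}$ as below, and let $\mathcal{T}$ be a solution to the $\mathcal{S}$-cyclic triomino problem. For $s\in\mathbb{Z}^2$: if $p(s,1)$ holds, then $q(s+u_j,1)$ holds for every $1\le j\le 4$; and if $q(s,1)$ holds, then $p(s+u_j,1)$ holds for every $1\le j\le 4$.
   Context: A domino set is $\mathcal{R}=(\mathcal{W},\mathcal{R}_1,\mathcal{R}_2)$ with $\mathcal{W}$ non-empty finite and $\mathcal{R}_1,\mathcal{R}_2\subset\mathcal{W}^2$; here $\mathcal{W}=\{1,\dots,m\}$. Let $u_1=(1,0),u_2=(0,1),u_3=(-1,0),u_4=(0,-1)$, indices mod 4. Fix $n\ge 2m+1$ and regard integers as elements of $\mathbb{Z}_n$. Let $L=\{(w,0,0): w\in\mathcal{W}\}$, $K_1=L\cup\{(0,b,a):(a,b)\in\mathcal{R}_1\}$, $K_2=L\cup\{(0,a,b):(a,b)\in\mathcal{R}_2\}$, $K_3=L\cup\{(0,a,b):(a,b)\in\mathcal{R}_1\}$, $K_4=L\cup\{(0,b,a):(a,b)\in\mathcal{R}_2\}$, with $K_{i+4}=K_i$. Let $\mathcal{V}=\mathbb{Z}_n$, $\mathcal{S}_i=\{(a+k,b+k,c+k):(a,b,c)\in K_i, k\in\mathcal{V}\}$, $\mathcal{S}_{i+4}=\mathcal{S}_i$, and $\mathcal{S}=(\mathcal{V},\mathcal{S}_1,\dots,\mathcal{S}_4)$.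 A solution to the $\mathcal{S}$-cyclic triomino problem is a function $\mathcal{T}:\mathbb{Z}^2\to\mathcal{V}$ with $(\mathcal{T}(s),\mathcal{T}(s+u_i),\mathcal{T}(s+u_{i+1}))\in\mathcal{S}_i$ for all $s$ and $1\le i\le 4$. For $s\in\mathbb{Z}^2$, $i\in\mathbb{Z}$, $p(s,i)$ is the statement $(\mathcal{T}(s),\mathcal{T}(s+u_i),\mathcal{T}(s+u_{i+1}))\in L$ and $q(s,i)$ is the statement $(\mathcal{T}(s),\mathcal{T}(s+u_i),\mathcal{T}(s+u_{i+1}))\in K_i\setminus L$. *)

From mathcomp Require Import all_boot all_order all_algebra.
Set Implicit Arguments. Unset Strict Implicit. Unset Printing Implicit Defensive.
Import GRing.Theory.
Local Open Scope ring_scope.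

Definition pt := (int * int)%type.
Definition padd (s t : pt) : pt := (s.1 + t.1, s.2 + t.2).

Definition u (i : nat) : pt :=
  match (i %% 4)%N with
  | 1 => (1, 0)
  | 2 => (0, 1)
  | 3 => (-1, 0)
  | _ => (0, -1)
  end.

Definition trip (n : nat) := ('Z_n * 'Z_n * 'Z_n)%type.

(* W = {1,...,m}; elements of W are regarded as elements of Z_n. *)
Definition inW (m w : nat) : Prop := (1 <= w <= m)%N.

Definition Lset (n m : nat) (t : trip n) : Prop :=
  exists w : nat, inW m w /\ t = (w%:R, 0, 0).

Definition Kset (n m : nat) (R1 R2 : rel nat) (i : nat) (t : trip n) : Prop :=
  Lset m t \/
  match (i %% 4)%N with
  | 1 => exists a b, R1 a b /\ t = (0, b%:R, a%:R)
  | 2 => exists a b, R2 a b /\ t = (0, a%:R, b%:R)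
  | 3 => exists a b, R1 a b /\ t = (0, a%:R, b%:R)
  | _ => exists a b, R2 a b /\ t = (0, b%:R, a%:R)
  end.

Definition Sset (n m : nat) (R1 R2 : rel nat) (i : nat) (t : trip n) : Prop :=
  exists (a b c k : 'Z_n), Kset m R1 R2 i (a, b, c) /\ t = (a + k, b + k, c + k).

Definition triple_at (n : nat) (T : pt -> 'Z_n) (s : pt) (i : nat) : trip n :=
  (T s, T (padd s (u i)), T (padd s (u i.+1))).

Definition is_solution (n m : nat) (R1 R2 : rel nat) (T : pt -> 'Z_n) : Prop :=
  forall (s : pt) (i : nat), (1 <= i <= 4)%N -> Sset m R1 R2 i (triple_at T s i).

Definition p_st (n m : nat) (T : pt -> 'Z_n) (s : pt) (i : nat) : Prop :=
  Lset m (triple_at T s i).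

Definition q_st (n m : nat) (R1 R2 : rel nat) (T : pt -> 'Z_n) (s : pt) (i : nat) : Prop :=
  Kset m R1 R2 i (triple_at T s i) /\ ~ Lset m (triple_at T s i).

From mathcomp Require Import all_boot all_order all_algebra.
From mathcomp Require Import zify.
Set Implicit Arguments. Unset Strict Implicit. Unset Printing Implicit Defensive.
Import GRing.Theory.
Local Open Scope ring_scope.

(* A triple of S_i is either a translate of an element of L, along which T
   drops by an element of W from s to both neighbours s + u_i, s + u_(i+1),
   or a translate of an element of K_i \ L, along which T rises by an element
   of W to both.  Since n >= 2m + 1, no sum of two elements of W vanishes in
   Z_n, so a rise and a drop cannot share an edge.  Going once around s, every
   point is therefore a peak (its four neighbours share one value, lower by an
   element of W) or a valley (its four neighbours are higher by elements of W),
   and the neighbours of a peak are valleys and vice versa.  If p(s,1) holds,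
   s is a peak whose neighbours have value 0; at a valley of value 0 the
   S_1-triple is an untranslated element of K_1 \ L, i.e. q holds.  If q(s,1)
   holds, s is a valley of value 0, so each neighbour t is a peak whose
   neighbours have value 0 and the triple at t is (T t, 0, 0) with T t in W. *)

Definition inWZ (m n : nat) (z : 'Z_n) : Prop := exists2 w, inW m w & z = w%:R.

Lemma natr_Zp_neq0 (n k : nat) : (0 < k < n)%N -> (k%:R : 'Z_n) != 0.
Proof.
move=> hk; apply/eqP => /(congr1 (@nat_of_ord _)).
by rewrite val_Zp_nat ?modn_small /=; lia.
Qed.

Section WValues.

Variables m n : nat.
Hypothesis Hn : (2 * m + 1 <= n)%N.

Lemma inWZ_neq0 (x : 'Z_n) : inWZ m x -> x != 0.
Proof. by move=> [w hw ->]; apply: natr_Zp_neq0; rewrite /inW in hw; lia. Qed.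

Lemma inWZ_add_neq0 (x y : 'Z_n) : inWZ m x -> inWZ m y -> x + y != 0.
Proof.
move=> [w hw ->] [w' hw' ->]; rewrite -natrD; apply: natr_Zp_neq0.
rewrite /inW in hw hw'; lia.
Qed.

Lemma inWZ_subC (x y : 'Z_n) : inWZ m (x - y) -> ~ inWZ m (y - x).
Proof.
by move=> hxy hyx; move: (inWZ_add_neq0 hxy hyx); rewrite addrA subrK subrr.
Qed.

End WValues.

Lemma u_back (s : pt) (j : nat) : (1 <= j <= 4)%N ->
  exists2 k, (1 <= k <= 4)%N & padd (padd s (u j)) (u k) = s.
Proof.
case: s => a b; case: j => [|[|[|[|[|j]]]]] // _;
  [exists 3%N | exists 4%N | exists 1%N | exists 2%N] => //;
  by rewrite /padd /u /= ?addr0 ?addrK ?subrK.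
Qed.

Section Triominoes.

Variables (m n : nat) (R1 R2 : rel nat).
Hypothesis HR1 : forall a b, R1 a b -> inW m a /\ inW m b.
Hypothesis HR2 : forall a b, R2 a b -> inW m a /\ inW m b.
Hypothesis Hn : (2 * m + 1 <= n)%N.

Lemma Lset_inv (x y z : 'Z_n) : Lset m (x, y, z) -> [/\ inWZ m x, y = 0 & z = 0].
Proof. by move=> [w [hw [-> -> ->]]]; split => //; exists w. Qed.

Lemma Lset_first_neq0 (y z : 'Z_n) : ~ Lset m (0, y, z).
Proof. by move=> /Lset_inv [/(inWZ_neq0 Hn)/eqP]. Qed.

Lemma Kset_cases (i : nat) (x y z : 'Z_n) : Kset m R1 R2 i (x, y, z) ->
  Lset m (x, y, z) \/ [/\ x = 0, inWZ m y & inWZ m z].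
Proof.
case=> [|hK]; [by left | right].
by move: hK; case: (i %% 4)%N => [|[|[|[|?]]]] /= [a [b [hab [-> -> ->]]]];
  first [case/HR1: hab | case/HR2: hab] => ha hb;
  split => //; by [exists a | exists b].
Qed.

Lemma Sset_cases (i : nat) (x y z : 'Z_n) : Sset m R1 R2 i (x, y, z) ->
  (inWZ m (x - y) /\ z = y) \/ (inWZ m (y - x) /\ inWZ m (z - x)).
Proof.
move=> [a [b [c [k [/Kset_cases hK [-> -> ->]]]]]].
case: hK => [/Lset_inv [ha -> ->] | [-> hb hc]]; [left | right].
  by rewrite add0r addrK.
by rewrite add0r !addrK.
Qed.

Lemma Sset_rise_Kset (i : nat) (x y z : 'Z_n) : Sset m R1 R2 i (x, y, z) ->
  inWZ m (y - x) -> Kset m R1 R2 i (0, y - x, z - x).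
Proof.
move=> [a [b [c [k [hK [-> -> ->]]]]]] hr.
case: (Kset_cases hK) => [/Lset_inv [ha hb _] | [ha _ _]].
  by move: (inWZ_add_neq0 Hn ha hr); rewrite hb add0r addrA subrr.
by move: hK; rewrite ha add0r !addrK.
Qed.

Variable T : pt -> 'Z_n.
Hypothesis HT : is_solution m R1 R2 T.

Definition corner_down (t : pt) (i : nat) : Prop :=
  inWZ m (T t - T (padd t (u i))) /\ T (padd t (u i.+1)) = T (padd t (u i)).

Definition corner_up (t : pt) (i : nat) : Prop :=
  inWZ m (T (padd t (u i)) - T t) /\ inWZ m (T (padd t (u i.+1)) - T t).

Definition peak (t : pt) : Prop :=
  exists2 c, inWZ m (T t - c) & forall k, (1 <= k <= 4)%N -> T (padd t (u k)) = c.

Definition valley (t : pt) : Prop :=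
  forall k, (1 <= k <= 4)%N -> inWZ m (T (padd t (u k)) - T t).

Lemma corner_cases (t : pt) (i : nat) : (1 <= i <= 4)%N ->
  corner_down t i \/ corner_up t i.
Proof. by move=> hi; apply: Sset_cases; apply: HT. Qed.

Lemma corner_down_next (t : pt) (i : nat) : (i <= 3)%N ->
  corner_down t i -> corner_down t i.+1.
Proof.
move=> hi [hd he]; case: (corner_cases t (i := i.+1) hi) => // -[hu _].
by rewrite he in hu; case: (inWZ_subC Hn hd hu).
Qed.

Lemma corner_up_next (t : pt) (i : nat) : (i <= 3)%N ->
  corner_up t i -> corner_up t i.+1.
Proof.
move=> hi [_ hu]; case: (corner_cases t (i := i.+1) hi) => // -[hd _].
by case: (inWZ_subC Hn hd hu).
Qed.

Lemma corner_down_peak (t : pt) : corner_down t 1 -> peak t.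
Proof.
move=> d1; have d2 := corner_down_next (i := 1) isT d1.
have d3 := corner_down_next (i := 2) isT d2.
exists (T (padd t (u 1))); first exact: d1.1.
by case=> [|[|[|[|[|k]]]]] // _; rewrite ?d3.2 ?d2.2 ?d1.2.
Qed.

Lemma corner_up_valley (t : pt) : corner_up t 1 -> valley t.
Proof.
move=> c1; have c2 := corner_up_next (i := 1) isT c1.
have c3 := corner_up_next (i := 2) isT c2.
case=> [|[|[|[|[|k]]]]] // _; [exact: c1.1 | exact: c2.1 | exact: c3.1 | exact: c3.2].
Qed.

Lemma peak_or_valley (t : pt) : peak t \/ valley t.
Proof.
case: (corner_cases t (i := 1) isT) => [/corner_down_peak | /corner_up_valley];
  by [left | right].
Qed.

Lemma peak_neighbor_valley (s : pt) (j : nat) : (1 <= j <= 4)%N ->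
  peak s -> valley (padd s (u j)).
Proof.
move=> hj [c hc hs]; have [k hk ht] := u_back s hj.
case: (peak_or_valley (padd s (u j))) => // -[c' hc' ht']; exfalso.
rewrite -(hs j hj) in hc; apply: (inWZ_subC Hn hc).
by move: hc'; rewrite -(ht' k hk) ht.
Qed.

Lemma valley_neighbor_peak (s : pt) (j : nat) : (1 <= j <= 4)%N ->
  valley s -> peak (padd s (u j)).
Proof.
move=> hj hs; have [k hk ht] := u_back s hj.
case: (peak_or_valley (padd s (u j))) => // ht'; exfalso.
by move: (ht' k hk); rewrite ht; apply: (inWZ_subC Hn); apply: hs.
Qed.

Lemma p_neighbor_q (s : pt) (j : nat) : (1 <= j <= 4)%N ->
  p_st m T s 1 -> q_st m R1 R2 T (padd s (u j)) 1.
Proof.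
move=> hj /Lset_inv [hw h1 h2].
have ps : peak s by apply: corner_down_peak; rewrite /corner_down h1 h2 subr0.
have vt := peak_neighbor_valley hj ps; set t := padd s (u j) in vt *.
have Tt0 : T t = 0 by case: ps => c _ hs; rewrite (hs j hj) -(hs 1%N isT).
have := Sset_rise_Kset (HT t (i := 1) isT) (vt 1%N isT).
rewrite /q_st /triple_at Tt0 !subr0; split => //; exact: Lset_first_neq0.
Qed.

Lemma q_neighbor_p (s : pt) (j : nat) : (1 <= j <= 4)%N ->
  q_st m R1 R2 T s 1 -> p_st m T (padd s (u j)) 1.
Proof.
move=> hj [hK hL]; case: (Kset_cases hK) => [/hL [] | [h0 h1 h2]].
have vs : valley s by apply: corner_up_valley; rewrite /corner_up h0 !subr0.
have [c [w hw Ew] ht] := valley_neighbor_peak hj vs.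
have [k hk Es] := u_back s hj.
have c0 : c = 0 by rewrite -(ht k hk) Es h0.
exists w; split => //; rewrite /triple_at (ht 1%N isT) (ht 2%N isT) c0.
by rewrite c0 subr0 in Ew; rewrite Ew.
Qed.

End Triominoes.

Theorem lemma3p4 (m n : nat) (R1 R2 : rel nat)
  (Hm : (0 < m)%N)
  (HR1 : forall a b, R1 a b -> inW m a /\ inW m b)
  (HR2 : forall a b, R2 a b -> inW m a /\ inW m b)
  (Hn : (2 * m + 1 <= n)%N)
  (T : pt -> 'Z_n) (HT : is_solution m R1 R2 T) (s : pt) :
  (p_st m T s 1 -> forall j, (1 <= j <= 4)%N -> q_st m R1 R2 T (padd s (u j)) 1) /\
  (q_st m R1 R2 T s 1 -> forall j, (1 <= j <= 4)%N -> p_st m T (padd s (u j)) 1).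
Proof.
split=> hs j hj; [exact: p_neighbor_q hs | exact: q_neighbor_p hs].
Qed.
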